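(* Let $\lambda_h>0$. For every $x>0$, every $\Psi\in\mathcal L$ and every nondecreasing function $g:[0,\infty)\to[0,\infty)$, $$A_{\lambda_h}(g;x,\Psi)\le_{\mathrm{st}}A_{\lambda_h}(g;x,\Psi_\infty).$$
   Context: $\mathcal L$ is the set of all bivariate cdfs with support in $(0,\infty)\times(0,\infty]$. For $\Psi\in\mathcal L$, $G(s)=\Psi(s,\infty)$. $\Psi_\infty$ denotes the cdf of a random vector $(S,Y)$ with $S\sim G$ and $Y=\infty$ almost surely, so that all customers join. The $M/G(\Psi)/1+H(\Psi)$ queue with rate $\lambda_h$ and initial workload $x$ is defined as follows. - It is a single-server FCFS queue with infinite waiting room. - There is one initial customer with remaining service $x$. - Arrivals form a Poisson process of rate $\lambda_h$. - $(S_i,Y_i)$ are iid with cdf $\Psi$ and independent of the arrivals. - The $i$-th arrival at time $T_i$ joins if and only if $Y_i\ge W(T_i-)$, where $W$ is the workload (decreasing at unit rate while positive), and if he joins he adds $S_i$. $W_{\lambda_h}(\cdot;x,\Psi)$ denotes the workload and $\tau_{\lambda_h}(x;\Psi)$ its first hitting time of $0$. Define $$A_{\lambda_h}(g;x,\Psi)=\int_0^{\tau_{\lambda_h}(x;\Psi)}g(W_{\lambda_h}(t;x,\Psi))\,dt.$$ $X\le_{\mathrm{st}}Y$ means $P(X>s)\le P(Y>s)$ for all $s$. *)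

From HB Require Import structures.
From mathcomp Require Import all_boot all_order all_algebra.
From mathcomp Require Import all_classical all_reals all_analysis measurable_realfun.
Set Implicit Arguments. Unset Strict Implicit. Unset Printing Implicit Defensive.
Import Order.TTheory GRing.Theory Num.Theory.
Import numFieldNormedType.Exports.
Local Open Scope classical_set_scope.
Local Open Scope ring_scope.
Local Open Scope ereal_scope.

Section Queue.
Variable R : realType.

Definition expcdf (lam t : R) : R :=
  if (t < 0)%R then 0%R else (1 - expR (- (lam * t)))%R.

Definition in_L (Psi : R -> \bar R -> R) : Prop :=
  exists mu : probability (R * \bar R)%type R,
    mu ([set z | (0 < z.1)%R /\ 0 < z.2]) = 1 /\
    forall (s : R) (y : \bar R),
      (Psi s y)%:E = mu ([set z | (z.1 <= s)%R /\ z.2 <= y]).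

(** Psi_inf: cdf of (S, +oo) with S ~ G, G(s) = Psi(s, +oo). *)
Definition Psi_inf (Psi : R -> \bar R -> R) (s : R) (y : \bar R) : R :=
  if y == +oo then Psi s +oo else 0%R.

(** Input of the M/G(Psi)/1+H(Psi) queue on a probability space:
    interarrival times [e i] (iid Exp(lam)), marks [(S i, Y i)] (iid with
    joint cdf Psi), all mutually independent; this is stated by giving the
    joint cdf of the first n triples, which determines the law of the whole
    sequence. The i-th arrival time is e 0 + ... + e i. *)
Definition queue_input (d : measure_display) (T : measurableType d)
  (P : probability T R) (lam : R) (Psi : R -> \bar R -> R)
  (e S : nat -> T -> R) (Y : nat -> T -> \bar R) : Prop :=
  [/\ forall i, measurable_fun setT (e i),
      forall i, measurable_fun setT (S i),
      forall i, measurable_fun setT (Y i),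
      forall i w, (0 < e i w)%R &
      forall (n : nat) (t s : nat -> R) (y : nat -> \bar R),
        P (\bigcap_(i in [set i | (i < n)%N])
             [set w | (e i w <= t i)%R /\ (S i w <= s i)%R /\ Y i w <= y i])
        = (\prod_(i < n) (expcdf lam (t i) * Psi (s i) (y i)))%:E ].

(** time of the n-th event (arrival n-1; 0 for n = 0) *)
Definition start (e : nat -> R) (n : nat) : R := (\sum_(i < n) e i)%R.

(** workload just after the n-th event (just after arrival n-1), as long as
    the system has not emptied; 0 once it has emptied. *)
Fixpoint wpost (x : R) (e S : nat -> R) (Y : nat -> \bar R) (n : nat) : R :=
  match n with
  | 0%N => x
  | n'.+1 =>
    let v := (wpost x e S Y n' - e n')%R in     (* = W(T_n' -) *)
    if (0 < v)%R then
      (v + (if (v%:E <= Y n')%E then S n' else 0))%R (* joins iff Y >= W(T-) *)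
    else 0%R
  end.

(** workload at time t (up to the end of the busy period; 0 afterwards) *)
Definition workload (x : R) (e S : nat -> R) (Y : nat -> \bar R) (t : R) : R :=
  let n := xget 0%N [set n | (start e n <= t)%R /\ (t < start e n.+1)%R] in
  Num.max (wpost x e S Y n - (t - start e n))%R 0%R.

(** first hitting time of 0 (+oo if never) *)
Definition tau (x : R) (e S : nat -> R) (Y : nat -> \bar R) : \bar R :=
  ereal_inf [set t%:E | t in [set t | (0 <= t)%R /\ workload x e S Y t = 0%R]].

Definition Aq (g : R -> R) (x : R) (e S : nat -> R) (Y : nat -> \bar R) : \bar R :=
  \int[lebesgue_measure]_(t in [set t | (0 <= t)%R /\ t%:E < tau x e S Y])
     (g (workload x e S Y t))%:E.

End Queue.

From Pilot Require Import Defs.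
From HB Require Import structures.
From mathcomp Require Import all_boot all_order all_algebra.
From mathcomp Require Import all_classical all_reals all_analysis measurable_realfun.
Import Order.TTheory GRing.Theory Num.Theory.
Local Open Scope classical_set_scope.
Local Open Scope ring_scope.
Local Open Scope ereal_scope.

(* Letting every customer join can only increase the workload at every time:
   by induction over the arrivals, since service times are a.s. nonnegative
   (Psi(0, +oo) = 0 because Psi lives on (0,oo) x (0,+oo]).  Hence the busy
   period tau and, g being nondecreasing, the integral A grow pathwise.  On the
   other hand the marks (e, S, +oo) of the first queue have the same law as the
   marks (e, S, Y) of the second one: their finite-dimensional cdfs agree and
   cylinders form a pi-system generating the sigma-algebra of mark sequences.
   So {A > s} for the first queue lies, up to a null set, in an event with the
   probability of {A > s} for the second.  That A is a measurable functional
   of the marks follows from writing tau through the countably many arrival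
   epochs and from Fubini-Tonelli. *)

Section measurable_from_sublevel_sets.
Context d (T : measurableType d) (R : realType).

Lemma measurable_funR_le (f : T -> R) :
  (forall a, measurable [set w | (f w <= a)%R]) -> measurable_fun setT f.
Proof.
move=> mf; apply: (measurability (RGenOInfty.G (R:=R))).
  exact: RGenOInfty.measurableE.
move=> _ [_ [a ->] <-]; rewrite setTI.
have -> : f @^-1` `]a, +oo[%classic = ~` [set w | (f w <= a)%R].
  by apply/seteqP; split => w /=; rewrite in_itv /= andbT ?ltNge => /negP.
exact/measurableC/mf.
Qed.

Lemma measurable_funE_le (f : T -> \bar R) :
  (forall a : R, measurable [set w | f w <= a%:E]) -> measurable_fun setT f.
Proof.
move=> mf; apply: (measurability (ErealGenOInfty.G (R:=R))).
  exact: ErealGenOInfty.measurableE.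
move=> _ [_ [a ->] <-]; rewrite setTI.
have -> : f @^-1` `]a%:E, +oo[%classic = ~` [set w | f w <= a%:E].
  by apply/seteqP; split => w /=; rewrite in_itv /= andbT ?ltNge => /negP.
exact/measurableC/mf.
Qed.

Lemma measurable_bool_set (b : T -> bool) :
  measurable_fun setT b -> measurable [set w | b w].
Proof.
move=> mb; have -> : [set w | b w] = setT `&` b @^-1` [set true].
  by apply/seteqP; split => w /=; [move=> ->|case].
exact: mb.
Qed.

End measurable_from_sublevel_sets.

Lemma nat_ub_finite_family {R : realType} (f : nat -> R) n :
  exists k : nat, forall j, (j < n)%N -> (f j <= k%:R)%R.
Proof.
elim: n => [|n [k Hk]]; first by exists 0%N.
have [m Hm] : exists m : nat, (f n <= m%:R)%R.
  exists (Num.truncn `|f n|).+1; apply: (le_trans (ler_norm _)).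
  exact/ltW/truncnS_gt.
exists (maxn k m) => j; rewrite ltnS leq_eqVlt => /orP [/eqP ->|/Hk hj].
  by apply: (le_trans Hm); rewrite ler_nat leq_maxr.
by apply: (le_trans hj); rewrite ler_nat leq_maxl.
Qed.

Section mark_sequences.
Variable R : realType.

Definition markseq := nat -> (R * R * \bar R)%type.
(* [g_sigma_algebraType] needs these instances declared on the alias itself *)
HB.instance Definition _ := Choice.on markseq.
HB.instance Definition _ := isPointed.Build markseq (fun _ => (0%R, 0%R, +oo)).

Definition cylinder (n : nat) (t s : nat -> R) (y : nat -> \bar R) : set markseq :=
  [set w | forall i, (i < n)%N ->
     ((w i).1.1 <= t i)%R /\ ((w i).1.2 <= s i)%R /\ (w i).2 <= y i].

Definition cylinders : set (set markseq) :=
  [set C | exists n t s y, C = cylinder n t s y].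

Definition Markseq := g_sigma_algebraType cylinders.

Definition coord_e i (w : Markseq) : R := (w i).1.1.
Definition coord_S i (w : Markseq) : R := (w i).1.2.
Definition coord_Y i (w : Markseq) : \bar R := (w i).2.

Lemma measurable_cylinder n t s y : measurable (cylinder n t s y : set Markseq).
Proof. by apply: sub_sigma_algebra; exists n, t, s, y. Qed.

Lemma measurable_coord_box i a b c :
  measurable [set w : Markseq |
    (coord_e i w <= a)%R /\ (coord_S i w <= b)%R /\ coord_Y i w <= c].
Proof.
(* the coordinates below [i] are left free by exhausting them with bounds [k] *)
have -> : [set w : Markseq |
    (coord_e i w <= a)%R /\ (coord_S i w <= b)%R /\ coord_Y i w <= c] =
  \bigcup_k cylinder i.+1 (fun j => if j == i then a else k%:R)
                          (fun j => if j == i then b else k%:R)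
                          (fun j => if j == i then c else +oo).
  apply/seteqP; split => w /=; last by move=> [k _ /(_ i (ltnSn i))]; rewrite eqxx.
  move=> wi; have [k Hk] := nat_ub_finite_family (fun j => Num.max (w j).1.1 (w j).1.2) i.
  exists k => // j; rewrite ltnS leq_eqVlt => /orP [/eqP ->|hj]; first by rewrite eqxx.
  by rewrite (ltn_eqF hj) leey; have := Hk _ hj; rewrite ge_max => /andP[-> ->].
apply: bigcupT_measurable => k; exact: measurable_cylinder.
Qed.

Lemma measurable_coord_e i : measurable_fun setT (coord_e i).
Proof.
apply: measurable_funR_le => a.
have -> : [set w : Markseq | (coord_e i w <= a)%R] =
   \bigcup_k [set w | (coord_e i w <= a)%R /\ (coord_S i w <= k%:R)%R /\ coord_Y i w <= +oo].
  apply/seteqP; split => w /=; last by case=> k _ [].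
  have [k Hk] := nat_ub_finite_family (fun j => coord_S j w) i.+1.
  by exists k => //; split => //; split; [exact: Hk|exact: leey].
by apply: bigcupT_measurable => k; exact: measurable_coord_box.
Qed.

Lemma measurable_coord_S i : measurable_fun setT (coord_S i).
Proof.
apply: measurable_funR_le => b.
have -> : [set w : Markseq | (coord_S i w <= b)%R] =
   \bigcup_k [set w | (coord_e i w <= k%:R)%R /\ (coord_S i w <= b)%R /\ coord_Y i w <= +oo].
  apply/seteqP; split => w /=; last by case=> k _ [? []].
  have [k Hk] := nat_ub_finite_family (fun j => coord_e j w) i.+1.
  by exists k => //; split; [exact: Hk|split => //; exact: leey].
by apply: bigcupT_measurable => k; exact: measurable_coord_box.
Qed.

Lemma measurable_coord_Y i : measurable_fun setT (coord_Y i).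
Proof.
apply: measurable_funE_le => c.
have -> : [set w : Markseq | coord_Y i w <= c%:E] =
   \bigcup_k [set w |
     (coord_e i w <= k%:R)%R /\ (coord_S i w <= k%:R)%R /\ coord_Y i w <= c%:E].
  apply/seteqP; split => w /=; last by case=> k _ [? []].
  have [k Hk] := nat_ub_finite_family (fun j => Num.max (coord_e j w) (coord_S j w)) i.+1.
  move=> wc; exists k => //.
  by have := Hk i (ltnSn i); rewrite ge_max => /andP[h1 h2].
by apply: bigcupT_measurable => k; exact: measurable_coord_box.
Qed.

Definition marks {T : Type} (e S : nat -> T -> R) (Y : nat -> T -> \bar R) (w : T)
  : Markseq := fun i => (e i w, S i w, Y i w).

Lemma measurable_marks d (T : measurableType d) (e S : nat -> T -> R)
    (Y : nat -> T -> \bar R) :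
  (forall i, measurable_fun setT (e i)) -> (forall i, measurable_fun setT (S i)) ->
  (forall i, measurable_fun setT (Y i)) -> measurable_fun setT (marks e S Y).
Proof.
move=> me mS mY; apply: (@measurability _ _ T Markseq setT (marks e S Y) cylinders) => //.
move=> _ [_ [n [t [s [y ->]]]] <-]; rewrite setTI.
have -> : marks e S Y @^-1` cylinder n t s y = \bigcap_i (if (i < n)%N then
      (e i @^-1` `]-oo, t i]) `&` ((S i @^-1` `]-oo, s i]) `&` (Y i @^-1` `[-oo, y i]))
      else setT).
  apply/seteqP; split => w /=.
    move=> w_cyl i _; case: ifP => // hi; have [h1 [h2 h3]] := w_cyl i hi.
    by rewrite /= !in_itv /= h1 h2 h3 leNye.
  move=> w_cap i hi; have := w_cap i I; rewrite hi /= !in_itv /=.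
  by move=> -[h1 [h2 /andP[_ h3]]].
apply: bigcapT_measurable => i; case: (i < n)%N; last exact: measurableT.
apply: measurableI; first by rewrite -[X in measurable X]setTI; exact: me.
apply: measurableI; first by rewrite -[X in measurable X]setTI; exact: mS.
by rewrite -[X in measurable X]setTI; apply: mY => //; exact: emeasurable_itv.
Qed.

End mark_sequences.
Arguments marks {R T}.
Arguments cylinder {R}.
Arguments coord_e {R}.
Arguments coord_S {R}.
Arguments coord_Y {R}.
Arguments measurable_marks {R d T e S Y}.

Section law_of_marks.
Context {R : realType}.

Definition meet_thresholds {d} {T : orderType d} (n1 n2 : nat) (u v : nat -> T) i : T :=
  if (i < n1)%N then (if (i < n2)%N then Order.min (u i) (v i) else u i) else v i.

Lemma le_meet_thresholds {d} {T : orderType d} n1 n2 (u v : nat -> T) i (z : T) :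
  (i < maxn n1 n2)%N -> (z <= meet_thresholds n1 n2 u v i)%O =
  ((i < n1)%N ==> (z <= u i)%O) && ((i < n2)%N ==> (z <= v i)%O).
Proof.
rewrite /meet_thresholds leq_max; case: (ltnP i n1) => h1; case: (ltnP i n2) => h2 //=.
- by rewrite le_min.
- by rewrite andbT.
Qed.

Lemma cylinders_setI_closed : setI_closed (cylinders R).
Proof.
move=> _ _ [n1 [t1 [s1 [y1 ->]]]] [n2 [t2 [s2 [y2 ->]]]].
exists (maxn n1 n2), (meet_thresholds n1 n2 t1 t2), (meet_thresholds n1 n2 s1 s2),
  (meet_thresholds n1 n2 y1 y2).
apply/seteqP; split => w /=.
  move=> [w1 w2] i hi; rewrite !le_meet_thresholds //.
  case h1: (i < n1)%N; case h2: (i < n2)%N => /=.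
  - by have [-> [-> ->]] := w1 i h1; have [-> [-> ->]] := w2 i h2.
  - by have [-> [-> ->]] := w1 i h1.
  - by have [-> [-> ->]] := w2 i h2.
  - by move: hi; rewrite leq_max h1 h2.
move=> w12; split => i hi.
  have hm : (i < maxn n1 n2)%N by rewrite leq_max hi.
  have [+ [+ +]] := w12 i hm; rewrite !le_meet_thresholds // hi /=.
  by move=> /andP[-> _] /andP[-> _] /andP[-> _].
have hm : (i < maxn n1 n2)%N by rewrite leq_max hi orbT.
have [+ [+ +]] := w12 i hm; rewrite !le_meet_thresholds // hi /= ?implybT ?andbT.
by move=> /andP[_ ->] /andP[_ ->] /andP[_ ->].
Qed.

Lemma marks_law_unique d1 (T1 : measurableType d1) (P1 : probability T1 R)
    (e1 S1 : nat -> T1 -> R) (Y1 : nat -> T1 -> \bar R)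
    d2 (T2 : measurableType d2) (P2 : probability T2 R)
    (e2 S2 : nat -> T2 -> R) (Y2 : nat -> T2 -> \bar R) :
  (forall i, measurable_fun setT (e1 i)) -> (forall i, measurable_fun setT (S1 i)) ->
  (forall i, measurable_fun setT (Y1 i)) ->
  (forall i, measurable_fun setT (e2 i)) -> (forall i, measurable_fun setT (S2 i)) ->
  (forall i, measurable_fun setT (Y2 i)) ->
  (forall n t s y, P1 (marks e1 S1 Y1 @^-1` cylinder n t s y) =
                   P2 (marks e2 S2 Y2 @^-1` cylinder n t s y)) ->
  forall B : set (Markseq R), measurable B ->
  P1 (marks e1 S1 Y1 @^-1` B) = P2 (marks e2 S2 Y2 @^-1` B).
Proof.
move=> me1 mS1 mY1 me2 mS2 mY2 Pcyl B mB.
have m1 := measurable_marks me1 mS1 mY1; have m2 := measurable_marks me2 mS2 mY2.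
apply: (@measure_unique _ R (Markseq R) (cylinders R) (fun _ => setT) erefl
  cylinders_setI_closed _ _ (pushforward P1 (marks e1 S1 Y1))
  (pushforward P2 (marks e2 S2 Y2)) _ _ B mB).
- by move=> _; exists 0%N, (fun _ => 0%R), (fun _ => 0%R), (fun _ => 0);
     apply/seteqP; split => w //= _ i.
- by rewrite bigcup_const.
- by move=> _ [n [t [s [y ->]]]]; exact: Pcyl.
- by move=> _ /=; rewrite /pushforward preimage_setT probability_setT ltry.
(* the shelved goals, which make the pushforwards measures, are [m1] and [m2] *)
Unshelve. all: by [].
Qed.

Lemma queue_input_marks_join_all {d} {T : measurableType d} {P : probability T R}
    {lam Psi e S Y} :
  queue_input P lam Psi e S Y -> forall n t s y,
  P (marks e S (fun _ _ => +oo) @^-1` cylinder n t s y) =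
  (\prod_(i < n) (expcdf lam (t i) * Psi_inf Psi (s i) (y i)))%:E.
Proof.
case=> _ _ _ _ Pcyl n t s y.
have [/existsP [j yj]|] := boolP [exists j : 'I_n, y j != +oo].
  rewrite (bigD1 j) //= /Psi_inf (negbTE yj) mulr0 mul0r.
  have -> : marks e S (fun _ _ => +oo) @^-1` cylinder n t s y = set0.
    apply/seteqP; split => w //= /(_ j (ltn_ord j)) [_ [_]].
    by rewrite leye_eq (negbTE yj).
  by rewrite measure0.
rewrite negb_exists => /forallP /(_ _)/negPn/eqP yoo.
have -> : marks e S (fun _ _ => +oo) @^-1` cylinder n t s y =
  \bigcap_(i in [set i | (i < n)%N])
     [set w | (e i w <= t i)%R /\ (S i w <= s i)%R /\ Y i w <= (fun=> +oo) i].
  apply/seteqP; split => w /=.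
    by move=> w_cyl i /= hi; have [h1 [h2 _]] := w_cyl i hi; do 2 split => //; exact: leey.
  by move=> w_cap i hi; have [h1 [h2 _]] := w_cap i hi; rewrite (yoo (Ordinal hi)).
rewrite Pcyl; congr (_%:E); apply: eq_bigr => i _ /=.
by rewrite /Psi_inf yoo eqxx.
Qed.

Lemma law_join_all {d1} {T1 : measurableType d1} {P1 : probability T1 R}
    {d2} {T2 : measurableType d2} {P2 : probability T2 R} {lam Psi}
    {e1 S1 : nat -> T1 -> R} {Y1 : nat -> T1 -> \bar R}
    {e2 S2 : nat -> T2 -> R} {Y2 : nat -> T2 -> \bar R} :
  queue_input P1 lam Psi e1 S1 Y1 -> queue_input P2 lam (Psi_inf Psi) e2 S2 Y2 ->
  forall B : set (Markseq R), measurable B ->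
  P1 (marks e1 S1 (fun _ _ => +oo) @^-1` B) = P2 (marks e2 S2 Y2 @^-1` B).
Proof.
move=> q1 q2; have [me1 mS1 _ _ _] := q1; have [me2 mS2 mY2 _ P2cyl] := q2.
apply: marks_law_unique => // n t s y.
by rewrite (queue_input_marks_join_all q1) -P2cyl.
Qed.

Lemma in_L_G0 (Psi : R -> \bar R -> R) : in_L Psi -> Psi 0%R +oo = 0%R.
Proof.
case=> mu [mu_supp mu_cdf].
have mA : measurable [set z : (R * \bar R)%type | (z.1 <= 0)%R /\ z.2 <= +oo].
  have -> : [set z : (R * \bar R)%type | (z.1 <= 0)%R /\ z.2 <= +oo] = fst @^-1` `]-oo, 0%R].
    by apply/seteqP; split => z /=; rewrite in_itv /= leey; [case|split].
  by rewrite -[X in measurable X]setTI; exact: measurable_fst.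
have mS : measurable [set z : (R * \bar R)%type | (0 < z.1)%R /\ 0 < z.2].
  have -> : [set z : (R * \bar R)%type | (0 < z.1)%R /\ 0 < z.2] =
     (fst @^-1` `]0%R, +oo[) `&` (snd @^-1` `]0%E, +oo]).
    by apply/seteqP; split => z /=; rewrite !in_itv /= ?leey ?andbT.
  apply: measurableI; rewrite -[X in measurable X]setTI; first exact: measurable_fst.
  by apply: measurable_snd => //; exact: emeasurable_itv.
have G0_le0 : mu [set z : (R * \bar R)%type | (z.1 <= 0)%R /\ z.2 <= +oo] <= 0.
  rewrite -(subee (x := 1)) // -[X in _ - X]mu_supp -probability_setC //.
  apply: le_measure; rewrite ?inE //; first exact: measurableC.
  by move=> z /= [h1 _] [h2 _]; move: h1; rewrite leNgt h2.
by apply/eqP; rewrite eq_le -!lee_fin mu_cdf G0_le0 measure_ge0.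
Qed.

Lemma queue_input_service_ge0 {d} {T : measurableType d} {P : probability T R}
    {lam Psi e S Y} :
  in_L Psi -> queue_input P lam Psi e S Y ->
  P.-negligible (\bigcup_i [set w | (S i w < 0)%R]).
Proof.
move=> LPsi q; have [me mS _ _ _] := q.
apply: negligible_bigcup => i.
pose C k := marks e S (fun _ _ => +oo) @^-1`
   cylinder i.+1 (fun _ => k%:R) (fun j => if j == i then 0%R else k%:R) (fun _ => +oo).
have PC k : P (C k) = 0.
  rewrite /C (queue_input_marks_join_all q) (bigD1 (Ordinal (ltnSn i))) //=.
  by rewrite eqxx /Psi_inf /= in_L_G0 // mulr0 mul0r.
have mC k : measurable (C k).
  rewrite -[X in measurable X]setTI.
  by apply: measurable_marks => //; exact: measurable_cylinder.
apply: (negligibleS _ (negligible_bigcup (fun k => proj2 (negligibleP _ (mC k)) (PC k)))).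
move=> w /= Sw; have [k Hk] := nat_ub_finite_family (fun j => Num.max (e j w) (S j w)) i.+1.
exists k => // j hj /=; have := Hk j hj; rewrite ge_max => /andP [h1 h2].
split => //; split; last exact: leey.
by case: ifP => // /eqP ->; exact: ltW.
Qed.

End law_of_marks.

Section busy_period.
Context {R : realType}.
Variables (x : R) (e S : nat -> R) (Y : nat -> \bar R).
Hypothesis e_gt0 : forall i, (0 < e i)%R.
Let e_ge0 i : (0 <= e i)%R := ltW (e_gt0 i).

Local Notation start := (start e).
Local Notation wpost := (wpost x e S Y).
Local Notation workload := (workload x e S Y).

Lemma startS n : start n.+1 = (start n + e n)%R.
Proof. by rewrite /Defs.start big_ord_recr. Qed.

Lemma start0 : start 0 = 0%R.
Proof. by rewrite /Defs.start big_ord0. Qed.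

Lemma le_start m n : (m <= n)%N -> (start m <= start n)%R.
Proof.
move=> /subnKC <-; elim: (n - m)%N => [|k IH]; first by rewrite addn0.
by rewrite addnS startS (le_trans IH) // lerDl.
Qed.

Lemma start_ge0 n : (0 <= start n)%R.
Proof. by rewrite -start0 le_start. Qed.

Definition between_events t n := (start n <= t)%R /\ (t < start n.+1)%R.

Lemma between_events_unique t n m : between_events t n -> between_events t m -> n = m.
Proof.
move=> [h1 h2] [h3 h4]; apply/eqP; rewrite eqn_leq; apply/andP; split.
  rewrite leqNgt; apply/negP => /le_start lt_mn.
  by have := lt_le_trans h4 lt_mn; rewrite ltNge h1.
rewrite leqNgt; apply/negP => /le_start lt_nm.
by have := lt_le_trans h2 lt_nm; rewrite ltNge h3.
Qed.

Definition event_index t := xget 0%N [set n | between_events t n].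

Lemma event_indexE {t n} : between_events t n -> event_index t = n.
Proof.
by move=> h; apply: xget_unique => // m hm; exact: between_events_unique hm h.
Qed.

Lemma event_index_out {t} : (forall n, ~ between_events t n) -> event_index t = 0%N.
Proof. exact: xgetPN. Qed.

Lemma workloadE t :
  workload t = Num.max (wpost (event_index t) - (t - start (event_index t)))%R 0%R.
Proof. by []. Qed.

Lemma workload_ge0 t : (0 <= workload t)%R.
Proof. by rewrite workloadE le_max lexx orbT. Qed.

Lemma start_le_out t : (0 <= t)%R -> (forall n, ~ between_events t n) ->
  forall n, (start n <= t)%R.
Proof.
move=> t0 out; elim=> [|n IH]; first by rewrite start0.
by rewrite leNgt; apply/negP => lt_t; apply: (out n).
Qed.

Lemma wpost_emptied n : (wpost n <= e n)%R -> wpost n.+1 = 0%R.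
Proof. by move=> h /=; rewrite ltNge subr_le0 h. Qed.

(* The system empties before arrival [n] iff [wpost n <= e n], and then at
   time [start n + wpost n]. *)
Definition empty_time n : \bar R :=
  if (wpost n <= e n)%R then ((start n + Num.max (wpost n) 0)%R)%:E else +oo.

(* The second term of the minimum only matters when the arrival times
   accumulate: after [sup_n start n] no period contains [t], so [workload t]
   falls back to [max (x - t) 0]. *)
Definition tau_seq : \bar R :=
  Order.min (einfs empty_time 0%N) (Order.max (esups (fun n => (start n)%:E) 0%N) x%:E).

Lemma le_einfs_empty_time n : einfs empty_time 0%N <= empty_time n.
Proof. by apply: ereal_inf_lbound; exists n. Qed.

Lemma start_le_esups n : (start n)%:E <= esups (fun n => (start n)%:E) 0%N.
Proof. by apply: ereal_sup_ubound; exists n. Qed.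

Lemma tau_seq_le_tau : tau_seq <= tau x e S Y.
Proof.
apply: le_ereal_inf_tmp => _ [t [t0 Wt] <-]; rewrite workloadE in Wt.
have Wt_le : (wpost (event_index t) <= t - start (event_index t))%R.
  by move: Wt => /eqP; rewrite eq_le ge_max subr_le0 => /andP[/andP[]].
have [[n tn]|out] := pselect (exists n, between_events t n).
  rewrite (event_indexE tn) in Wt_le; rewrite /tau_seq ge_min; apply/orP; left.
  apply: (le_trans (le_einfs_empty_time n)); have [h1 h2] := tn.
  rewrite /empty_time ifT; last by apply: (le_trans Wt_le); rewrite lerBlDl -startS ltW.
  by rewrite lee_fin -lerBrDl ge_max Wt_le subr_ge0 h1.
have {}out n : ~ between_events t n by move=> tn; apply: out; exists n.
rewrite (event_index_out out) /= start0 subr0 in Wt_le.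
rewrite /tau_seq ge_min ge_max lee_fin Wt_le andbT; apply/orP; right.
by apply: ge_ereal_sup => _ [n _ <-]; rewrite lee_fin start_le_out.
Qed.

Lemma wpost_emptied_after n k : (wpost n <= e n)%R -> wpost (n + k).+1 = 0%R.
Proof.
move=> /wpost_emptied wn; elim: k => [|k IH]; first by rewrite addn0.
by rewrite addnS wpost_emptied // IH ltW.
Qed.

Lemma workload_empty_time n : (wpost n <= e n)%R ->
  workload (start n + Num.max (wpost n) 0)%R = 0%R.
Proof.
move=> wn; have w_le : (Num.max (wpost n) 0 <= e n)%R by rewrite ge_max wn ltW.
rewrite workloadE; have [w_lt|w_ge] := ltP (Num.max (wpost n) 0)%R (e n).
  rewrite (event_indexE (n := n)); last first.
    by split; [rewrite lerDl le_max lexx orbT|rewrite startS ltrD2l].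
  apply/eqP; rewrite eq_le ge_max lexx le_max lexx orbT !andbT /= subr_le0.
  by rewrite addrC addKr le_max lexx.
have -> : (start n + Num.max (wpost n) 0 = start n.+1)%R.
  by rewrite startS; congr (_ + _)%R; apply/eqP; rewrite eq_le w_le w_ge.
rewrite (event_indexE (n := n.+1)); last by split => //; rewrite [X in (_ < X)%R]startS ltrDl.
by rewrite subrr subr0 -(addn0 n) wpost_emptied_after // maxxx.
Qed.

Lemma tau_le_empty_time {n} : (wpost n <= e n)%R ->
  tau x e S Y <= (start n + Num.max (wpost n) 0)%R%:E.
Proof.
move=> wn; apply: ereal_inf_lbound; exists (start n + Num.max (wpost n) 0)%R => //.
split; last exact: workload_empty_time.
by rewrite addr_ge0 ?start_ge0 // le_max lexx orbT.
Qed.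

Lemma first_empty_time_le_tau_seq {n} : (wpost n <= e n)%R ->
  (forall m, (wpost m <= e m)%R -> (n <= m)%N) ->
  (start n + Num.max (wpost n) 0)%R%:E <= tau_seq.
Proof.
move=> wn first; have w_le : (Num.max (wpost n) 0 <= e n)%R by rewrite ge_max wn ltW.
have le_next : (start n + Num.max (wpost n) 0 <= start n.+1)%R by rewrite startS lerD2l.
rewrite /tau_seq le_min le_max; apply/andP; split; last first.
  by apply/orP; left; apply: le_trans (start_le_esups n.+1); rewrite lee_fin.
apply: le_ereal_inf_tmp => _ [m _ <-]; rewrite /empty_time.
case: ifP => [wm|_]; last exact: leey.
have := first m wm; rewrite leq_eqVlt => /orP [/eqP <-//|lt_nm].
rewrite -(subnKC lt_nm) addSn wpost_emptied_after // maxxx addr0 lee_fin.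
by rewrite (le_trans le_next) // le_start // leq_addr.
Qed.

Lemma tau_le_never_empty : (0 < x)%R -> (forall n, (e n < wpost n)%R) ->
  tau x e S Y <= tau_seq.
Proof.
move=> x0 never; rewrite /tau_seq.
have -> : einfs empty_time 0%N = +oo.
  apply/eqP; rewrite eq_le leey /=; apply: le_ereal_inf_tmp => _ [n _ <-].
  by rewrite /empty_time ifF // leNgt never.
rewrite min_r ?leey //.
case sup_start : (esups (fun n => (start n)%:E) 0%N) => [L| |]; last first.
- by have := start_le_esups 0; rewrite sup_start leeNy_eq.
- by rewrite maxye leey.
have start_le n : (start n <= L)%R by rewrite -lee_fin -sup_start start_le_esups.
rewrite -EFin_max; apply: ereal_inf_lbound; exists (Num.max L x) => //.
split; first by rewrite le_max (ltW x0) orbT.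
have out n : ~ between_events (Num.max L x) n.
  move=> [_ lt_next]; have := start_le n.+1; rewrite leNgt => /negP; apply.
  by apply: le_lt_trans lt_next; rewrite le_max lexx.
rewrite workloadE (event_index_out out) /= start0 subr0.
by apply/eqP; rewrite eq_le ge_max lexx le_max lexx !orbT andbT subr_le0 le_max lexx orbT.
Qed.

Lemma tau_eq_seq : (0 < x)%R -> tau x e S Y = tau_seq.
Proof.
move=> x0; apply/le_anti; rewrite tau_seq_le_tau andbT.
have [[n0 wn0]|never] := pselect (exists n, (wpost n <= e n)%R); last first.
  by apply: tau_le_never_empty => // n; rewrite ltNge; apply/negP => wn; apply: never; exists n.
have [n wn first] := ex_minnP (ex_intro (fun n => (wpost n <= e n)%R) n0 wn0).
exact: le_trans (tau_le_empty_time wn) (first_empty_time_le_tau_seq wn first).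
Qed.

End busy_period.

Section join_all.
Context {R : realType}.
Variables (x : R) (e S : nat -> R) (Y : nat -> \bar R).
Hypothesis x_ge0 : (0 <= x)%R.
Hypothesis S_ge0 : forall i, (0 <= S i)%R.

Local Notation Yoo := (fun _ : nat => +oo : \bar R).

Lemma wpost_le_join_all n :
  (wpost x e S Y n <= wpost x e S Yoo n)%R /\ (0 <= wpost x e S Yoo n)%R.
Proof.
elim: n => [|n [IH1 IH2]] //=; rewrite leey.
have post_ge0 (v s : R) : (0 <= s)%R -> (0 <= if (0 < v)%R then v + s else 0)%R.
  by move=> s0; case: ifP => // /ltW v0; rewrite addr_ge0.
split; last exact: post_ge0.
have [v_gt0|_] := ltP 0%R (wpost x e S Y n - e n)%R; last exact: post_ge0.
have -> : (0 < wpost x e S Yoo n - e n)%R by apply: lt_le_trans v_gt0 _; rewrite lerD2r.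
apply: lerD; first by rewrite lerD2r.
by case: ifP => _; rewrite ?S_ge0.
Qed.

Lemma workload_le_join_all t : (workload x e S Y t <= workload x e S Yoo t)%R.
Proof.
rewrite !workloadE ge_max !le_max lexx !orbT andbT lerD2r; apply/orP; left.
exact: (wpost_le_join_all _).1.
Qed.

Lemma tau_le_join_all : tau x e S Y <= tau x e S Yoo.
Proof.
apply: ereal_inf_le_tmp => _ [t [t0 W0] <-]; exists t => //; split => //.
by apply/eqP; rewrite eq_le workload_ge0 andbT -W0 workload_le_join_all.
Qed.

End join_all.

Definition integrand {R : realType} (g : R -> R) (x : R) (e S : nat -> R)
    (Y : nat -> \bar R) : R -> \bar R :=
  (fun t => (g (workload x e S Y t))%:E) \_ [set t | (0 <= t)%R /\ t%:E < tau x e S Y].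

Lemma AqE {R : realType} (g : R -> R) x e S Y :
  Aq g x e S Y = \int[lebesgue_measure]_t integrand g x e S Y t.
Proof. by rewrite /Aq integral_mkcond. Qed.

Lemma integrand_ge0 {R : realType} (g : R -> R) x e S Y t :
  (forall u, (0 <= u)%R -> (0 <= g u)%R) -> 0 <= integrand g x e S Y t.
Proof.
move=> g_ge0; rewrite /integrand /patch; case: ifP => // _.
by rewrite lee_fin g_ge0 ?workload_ge0.
Qed.

Section measurable_Aq.
Context {R : realType}.
Variable x : R.

(* [1] is a junk value making every interarrival time positive, as the busy
   period analysis requires; on the image of an input with positive
   interarrival times [coord_e_pos] coincides with [coord_e]. *)
Definition coord_e_pos i (w : Markseq R) : R :=
  if (0 < coord_e i w)%R then coord_e i w else 1%R.

Local Notation E w := (coord_e_pos^~ w).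
Local Notation S w := (coord_S^~ w).
Local Notation Y w := (coord_Y^~ w).

Lemma coord_e_pos_gt0 i w : (0 < coord_e_pos i w)%R.
Proof. by rewrite /coord_e_pos; case: ifP. Qed.

Lemma measurable_coord_e_pos i : measurable_fun setT (coord_e_pos i).
Proof.
apply: measurable_fun_ifT => //; last exact: measurable_coord_e.
by apply: measurable_fun_ltr => //; exact: measurable_coord_e.
Qed.

Lemma measurable_start n : measurable_fun setT (fun w => start (E w) n).
Proof. by apply: measurable_sum => i; exact: measurable_coord_e_pos. Qed.

Lemma measurable_wpost n : measurable_fun setT (fun w => wpost x (E w) (S w) (Y w) n).
Proof.
elim: n => [|n IH] //=.
have mv : measurable_fun setT (fun w => wpost x (E w) (S w) (Y w) n - coord_e_pos n w)%R.
  by apply: measurable_funB => //; exact: measurable_coord_e_pos.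
apply: measurable_fun_ifT => //; first exact: measurable_fun_ltr.
apply: measurable_funD => //.
apply: measurable_fun_ifT; [|exact: measurable_coord_S|exact: measurable_cst].
apply: measurable_fun_lee; last exact: measurable_coord_Y.
exact: measurableT_comp.
Qed.

Definition between_events_set n : set (Markseq R * R) :=
  [set p | between_events (E p.1) p.2 n].

Lemma measurable_between_events_set n : measurable (between_events_set n).
Proof.
have -> : between_events_set n =
    [set p | (start (E p.1) n <= p.2)%R] `&` [set p | (p.2 < start (E p.1) n.+1)%R].
  by [].
have mstart m : measurable_fun setT (fun p : Markseq R * R => start (E p.1) m).
  exact: measurableT_comp (measurable_start m) measurable_fst.
apply: measurableI; apply: measurable_bool_set.
  exact: (measurable_fun_ler (f := fun p => start (E p.1) n) (g := snd)).
exact: (measurable_fun_ltr (f := snd) (g := fun p => start (E p.1) n.+1)).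
Qed.

Definition workload_from n (p : Markseq R * R) : R :=
  Num.max (wpost x (E p.1) (S p.1) (Y p.1) n - (p.2 - start (E p.1) n))%R 0%R.

Lemma measurable_workload_from n : measurable_fun setT (workload_from n).
Proof.
apply: measurable_maxr => //; apply: measurable_funB.
  exact: measurableT_comp (measurable_wpost n) measurable_fst.
by apply: measurable_funB => //; exact: measurableT_comp (measurable_start n) measurable_fst.
Qed.

Lemma workload_from_cases p :
  (exists n, between_events_set n p /\
     workload x (E p.1) (S p.1) (Y p.1) p.2 = workload_from n p) \/
  ((forall n, ~ between_events_set n p) /\
     workload x (E p.1) (S p.1) (Y p.1) p.2 = workload_from 0 p).
Proof.
have [[n tn]|out] := pselect (exists n, between_events_set n p).
  by left; exists n; rewrite workloadE (event_indexE _ (coord_e_pos_gt0^~ p.1) tn).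
right; have {}out n : ~ between_events_set n p by move=> tn; apply: out; exists n.
by rewrite workloadE (event_index_out _ out).
Qed.

Lemma measurable_workload :
  measurable_fun setT (fun p : Markseq R * R => workload x (E p.1) (S p.1) (Y p.1) p.2).
Proof.
move=> _ B mB; rewrite setTI.
have mB_from n : measurable (workload_from n @^-1` B).
  by rewrite -[X in measurable X]setTI; exact: measurable_workload_from.
have -> : (fun p : Markseq R * R => workload x (E p.1) (S p.1) (Y p.1) p.2) @^-1` B =
    (\bigcup_n (between_events_set n `&` workload_from n @^-1` B)) `|`
    (~` (\bigcup_n between_events_set n) `&` workload_from 0 @^-1` B).
  apply/seteqP; split => p /=.
    case: (workload_from_cases p) => [[n [tn ->]]|[out ->]] Bp; first by left; exists n.
    by right; split => // -[n _ tn]; exact: (out n).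
  have uniq n m : between_events_set n p -> between_events_set m p -> n = m.
    exact: between_events_unique (coord_e_pos_gt0^~ p.1) _ _ _.
  case: (workload_from_cases p) => [[m [tm ->]]|[out ->]].
    by case=> [[n _ [tn Bp]]|[out _]]; [rewrite (uniq m n)|case: out; exists m].
  by case=> [[n _ [tn _]]|[_ Bp]] //; case: (out n).
apply: measurableU.
  apply: bigcupT_measurable => n; apply: measurableI => //.
  exact: measurable_between_events_set.
apply: measurableI => //; apply: measurableC.
by apply: bigcupT_measurable => n; exact: measurable_between_events_set.
Qed.

Lemma measurable_empty_time n :
  measurable_fun setT (fun w => empty_time x (E w) (S w) (Y w) n).
Proof.
apply: measurable_fun_ifT => //.
  by apply: measurable_fun_ler; [exact: measurable_wpost|exact: measurable_coord_e_pos].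
apply: measurableT_comp => //; apply: measurable_funD; first exact: measurable_start.
by apply: measurable_maxr => //; exact: measurable_wpost.
Qed.

Hypothesis x_gt0 : (0 < x)%R.

Lemma measurable_tau : measurable_fun setT (fun w => tau x (E w) (S w) (Y w)).
Proof.
rewrite (_ : (fun w => _) = fun w => tau_seq x (E w) (S w) (Y w)); last first.
  by apply/funext => w; rewrite tau_eq_seq //; exact: (coord_e_pos_gt0^~ w).
apply: measurable_mine.
  exact: (measurable_fun_einfs (f := fun n w => empty_time x (E w) (S w) (Y w) n))
    measurable_empty_time 0%N.
apply: measurable_maxe => //.
apply: (measurable_fun_esups (f := fun n w => (start (E w) n)%:E)) => n.
by apply: measurableT_comp => //; exact: measurable_start.
Qed.

Variable g : R -> R.
Hypothesis g_ge0 : forall u : R, (0 <= u)%R -> (0 <= g u)%R.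
Hypothesis g_nd : forall u v : R, (0 <= u)%R -> (u <= v)%R -> (g u <= g v)%R.

Lemma measurable_integrand_joint :
  measurable_fun setT (fun p : Markseq R * R => integrand g x (E p.1) (S p.1) (Y p.1) p.2).
Proof.
pose g0 u := g (Num.max u 0%R).
have mg0 : measurable_fun setT g0.
  apply: nondecreasing_measurable => // u v uv; apply: g_nd; first by rewrite le_max lexx orbT.
  by rewrite ge_max !le_max uv lexx !orbT.
pose D := [set p : Markseq R * R | (0 <= p.2)%R /\ p.2%:E < tau x (E p.1) (S p.1) (Y p.1)].
have mD : measurable D.
  have -> : D = [set p | (0 <= p.2)%R] `&` [set p | p.2%:E < tau x (E p.1) (S p.1) (Y p.1)].
    by [].
  apply: measurableI; apply: measurable_bool_set.
    exact: measurable_fun_ler (measurable_cst _) measurable_snd.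
  apply: (measurable_fun_lte (f := fun p => p.2%:E)); first exact: measurableT_comp.
  exact: measurableT_comp measurable_tau measurable_fst.
rewrite (_ : (fun p => _) = (fun p => (g0 (workload x (E p.1) (S p.1) (Y p.1) p.2))%:E) \_ D).
  apply/(measurable_restrictT _ mD)/measurable_funTS/measurableT_comp => //.
  exact: measurableT_comp mg0 measurable_workload.
by apply/funext => p; rewrite /integrand /patch /g0 max_l ?workload_ge0.
Qed.

Lemma measurable_Aq : measurable_fun setT (fun w => Aq g x (E w) (S w) (Y w)).
Proof.
rewrite (_ : (fun w => _) = fubini_F lebesgue_measure
  (fun p : Markseq R * R => integrand g x (E p.1) (S p.1) (Y p.1) p.2)).
  apply: measurable_fun_fubini_tonelli_F; first exact: measurable_integrand_joint.
  by move=> p; exact: integrand_ge0.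
by apply/funext => w; rewrite AqE.
Qed.

End measurable_Aq.

Section comparison.
Context {R : realType}.
Variable x : R.
Hypothesis x_gt0 : (0 < x)%R.
Variable g : R -> R.
Hypothesis g_ge0 : forall u : R, (0 <= u)%R -> (0 <= g u)%R.
Hypothesis g_nd : forall u v : R, (0 <= u)%R -> (u <= v)%R -> (g u <= g v)%R.

Lemma coord_e_pos_marks (T : Type) (e S : nat -> T -> R) (Y : nat -> T -> \bar R) w :
  (forall i, (0 < e i w)%R) -> coord_e_pos^~ (marks e S Y w) = e^~ w.
Proof. by move=> e_gt0; apply/funext => i; rewrite /coord_e_pos /coord_e /marks /= e_gt0. Qed.

Lemma measurable_integrand e S Y : (forall i, (0 < e i)%R) ->
  measurable_fun setT (integrand g x e S Y).
Proof.
move=> e_gt0; pose w := marks (fun i _ => e i) (fun i _ => S i) (fun i _ => Y i) tt.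
have -> : integrand g x e S Y =
    fun t => integrand g x (coord_e_pos^~ w) (coord_S^~ w) (coord_Y^~ w) t.
  by apply/funext => t /=; rewrite /w coord_e_pos_marks.
exact (measurable_fun_pair2 w (measurable_integrand_joint _ x_gt0 _ g_nd)).
Qed.

Lemma Aq_le_join_all e S Y : (forall i, (0 < e i)%R) -> (forall i, (0 <= S i)%R) ->
  Aq g x e S Y <= Aq g x e S (fun=> +oo).
Proof.
move=> e_gt0 S_ge0; rewrite !AqE; apply: (ge0_le_integral _ measurableT).
- by move=> t _; exact: integrand_ge0.
- exact: measurable_integrand.
- exact: measurable_integrand.
move=> t _; rewrite {1}/integrand /patch; case: ifP => /asboolP tD; last exact: integrand_ge0.
rewrite /integrand /patch ifT; last first.
  rewrite in_setE; case: tD => t0 t_tau; split => //.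
  exact: lt_le_trans t_tau (tau_le_join_all _ _ _ _ (ltW x_gt0) S_ge0).
by rewrite lee_fin g_nd ?workload_ge0 ?workload_le_join_all // ltW.
Qed.

Definition Aq_gt (s : R) : set (Markseq R) :=
  [set w | s%:E < Aq g x (coord_e_pos^~ w) (coord_S^~ w) (coord_Y^~ w)].

Lemma measurable_Aq_gt s : measurable (Aq_gt s).
Proof.
rewrite -[X in measurable X]setTI.
exact: emeasurable_fun_o_infty measurableT (measurable_Aq _ x_gt0 _ g_ge0 g_nd) s%:E.
Qed.

Lemma preimage_Aq_gt (T : Type) (e S : nat -> T -> R) (Y : nat -> T -> \bar R) s :
  (forall i w, (0 < e i w)%R) ->
  [set w | s%:E < Aq g x (e^~ w) (S^~ w) (Y^~ w)] = marks e S Y @^-1` Aq_gt s.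
Proof.
by move=> e_gt0; apply/seteqP; split => w; rewrite /Aq_gt /= coord_e_pos_marks.
Qed.

Lemma preimage_Aq_gt_join_all {T : Type} {e S : nat -> T -> R} {Y : nat -> T -> \bar R} :
  (forall i w, (0 < e i w)%R) -> forall s,
  marks e S Y @^-1` Aq_gt s `<=`
  marks e S (fun _ _ => +oo) @^-1` Aq_gt s `|` \bigcup_i [set w | (S i w < 0)%R].
Proof.
move=> e_gt0 s w; rewrite /Aq_gt /= !coord_e_pos_marks // => Aq_gt_s.
have [S_ge0|] := pselect (forall i, (0 <= S i w)%R); last first.
  by move=> /existsNP[i /negP]; rewrite -ltNge => Si_lt0; right; exists i.
by left; apply: lt_le_trans Aq_gt_s _; exact: Aq_le_join_all.
Qed.

End comparison.

Theorem lemma2 (R : realType) (lam : R) (hlam : (0 < lam)%R)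
  (x : R) (hx : (0 < x)%R)
  (Psi : R -> \bar R -> R) (hPsi : in_L Psi)
  (g : R -> R) (g_ge0 : forall u : R, (0 <= u)%R -> (0 <= g u)%R)
  (g_nd : forall u v : R, (0 <= u)%R -> (u <= v)%R -> (g u <= g v)%R)
  (d1 : measure_display) (T1 : measurableType d1) (P1 : probability T1 R)
  (e1 S1 : nat -> T1 -> R) (Y1 : nat -> T1 -> \bar R)
  (h1 : queue_input P1 lam Psi e1 S1 Y1)
  (d2 : measure_display) (T2 : measurableType d2) (P2 : probability T2 R)
  (e2 S2 : nat -> T2 -> R) (Y2 : nat -> T2 -> \bar R)
  (h2 : queue_input P2 lam (Psi_inf Psi) e2 S2 Y2)
  (s : R) :
  P1 [set w | s%:E < Aq g x (fun i => e1 i w) (fun i => S1 i w) (fun i => Y1 i w)]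
  <= P2 [set w | s%:E < Aq g x (fun i => e2 i w) (fun i => S2 i w) (fun i => Y2 i w)].
Proof.
have [me1 mS1 mY1 e1_gt0 _] := h1; have [_ _ _ e2_gt0 _] := h2.
have mA := measurable_Aq_gt _ hx _ g_ge0 g_nd s.
rewrite !preimage_Aq_gt // -(law_join_all h1 h2 _ mA).
have [N [mN PN0 negN]] := queue_input_service_ge0 hPsi h1.
have mA1 : measurable (marks e1 S1 (fun _ _ => +oo) @^-1` Aq_gt x g s).
  by rewrite -[X in measurable X]setTI; exact: measurable_marks.
rewrite -(@measureU0 _ _ _ P1 _ _ mA1 mN PN0); apply: le_measure; rewrite ?inE //.
- by rewrite -[X in measurable X]setTI; exact: measurable_marks.
- exact: measurableU.
by move=> w /(preimage_Aq_gt_join_all _ hx _ g_ge0 g_nd e1_gt0 s) [?|/negN]; [left|right].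
Qed.
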